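(* (Work in $\mathsf{ZFC}$.) Let $\mathcal S$ be a countable vocabulary of function symbols and predicate symbols of finite arity, containing the binary predicate symbols $=,\neq,\in,\notin$. Let $T$ be a set of $\Sigma(L_{\omega\omega}(\mathcal S))$ conditionals and let $\chi\Rightarrow\chi'$ be a $\Sigma(L_{\omega\omega}(\mathcal S))$ conditional. Then either $\chi\Rightarrow\chi'$ has a finitary positivistic proof from the axioms of $T$ together with the logical axioms (L1)–(L23) listed below, or there is an admissible structure $M$ that models every conditional of $T$ but in which, for some assignment of elements to the free variables, $\chi$ holds and $\chi'$ fails. Logical axioms (here free and bound variables are kept distinct: $x,y$ denote bound variables, $a$ a free variable, $r,s,t$ terms, $\phi,\psi,\chi$ arbitrary $\Sigma$ formulas, and $\phi^x_t$ denotes substitution of $t$ for $x$): (L1) $\phi\Rightarrow\top$; (L2) $\bot\Rightarrow\psi$; (L3) $\phi\wedge\psi\Rightarrow\phi$; (L4) $\phi\wedge\psi\Rightarrow\psi$; (L5) $\phi\Rightarrow\phi\wedge\phi$; (L6) $\phi\Rightarrow\phi\vee\psi$; (L7) $\psi\Rightarrow\phi\vee\psi$; (L8) $\psi\vee\psi\Rightarrow\psi$; (L9) $(\phi\vee\psi)\wedge\chi\Rightarrow(\phi\wedge\chi)\vee(\psi\wedge\chi)$; (L10) $\phi^x_t\Rightarrow\exists x\,\phi$; (L11) $\exists y\,\psi\Rightarrow\psi$; (L12) $\chi\wedge\exists y\,\phi\Rightarrow\exists y\,(\chi\wedge\phi)$; (L13) $t\in s\wedge\forall x\in s\,\phi\Rightarrow\phi^x_t$;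 (L14) $\psi\Rightarrow\forall y\in s\,(\psi\wedge y\in s)$; (L15) $\forall y\in s\,(\chi\vee\phi)\Rightarrow\chi\vee\forall y\in s\,\phi$; (L16) $\top\Rightarrow s\in t\vee s\notin t$; (L17) $s\in t\wedge s\notin t\Rightarrow\bot$; (L18) $\top\Rightarrow s=t\vee s\neq t$; (L19) $s=t\wedge s\neq t\Rightarrow\bot$; (L20) $\top\Rightarrow t=t$; (L21) $s=t\Rightarrow t=s$; (L22) $r=s\wedge s=t\Rightarrow r=t$; (L23) $s=t\wedge\phi^a_s\Rightarrow\phi^a_t$.
   Context: $\Sigma(L_{\omega\omega}(\mathcal S))$ formulas: built from atomic formulas of $\mathcal S$ (including the logical constants $\top,\bot$; the symbols $\neq,\notin$ are primitive predicate symbols, not abbreviations) using binary conjunction $\wedge$, binary disjunction $\vee$, bounded universal quantification $\forall x\in t\,\phi$ ($t$ a term), and unbounded existential quantification $\exists x\,\phi$; there is no negation and no implication. A conditional is an expression $\phi\Rightarrow\psi$ with $\phi,\psi$ $\Sigma$ formulas. An application of a conditional $\phi(v_1,\dots,v_n)\Rightarrow\psi(v_1,\dots,v_n)$ (where $v_1,\dots,v_n$ include its free variables) is a pair $(\chi_0,\chi_1)$ of $\Sigma$ formulas such that $\chi_1$ is obtained from $\chi_0$ by replacing one occurrence of a subformula of the form $\phi(t_1,\dots,t_n)$ by $\psi(t_1,\dots,t_n)$, where the terms $t_i$ may contain variables bound in $\chi_0$ (''deep inference''). A finitary positivistic proof of $\chi\Rightarrow\chi'$ from a set of conditionals (axioms)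 is a finite sequence $\chi_0=\chi,\chi_1,\dots,\chi_n=\chi'$ of $\Sigma$ formulas such that each $(\chi_i,\chi_{i+1})$ is an application of some axiom. An admissible structure for $\mathcal S$ is a structure in which $=$ is genuine equality, $\neq$ is interpreted as the complement of $=$, and $\notin$ as the complement of the interpretation of $\in$. A structure models a conditional $\phi\Rightarrow\psi$ if it satisfies the universal closure of $\phi\to\psi$. *)

From Stdlib Require Import List Arith PeanoNat.
Import ListNotations.

Record vocab := Vocab {
  fsym : Type;
  psym : Type;
  far : fsym -> nat;
  par : psym -> nat;
  sEq : psym;
  sNeq : psym;
  sIn : psym;
  sNin : psym
}.

Section Syntax.
Variable V : vocab.

(* Terms: free variables (parameters) are named by nat, bound variables are
   de Bruijn indices (so free and bound variables are kept distinct). *)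
Inductive term : Type :=
| fvar : nat -> term
| bvar : nat -> term
| tapp : fsym V -> list term -> term.

(* Sigma formulas: atoms, top, bot, /\, \/, bounded forall x in t, exists x.
   In [fall t phi] and [fex phi] the body [phi] binds de Bruijn index 0. *)
Inductive formula : Type :=
| fatom : psym V -> list term -> formula
| ftop : formula
| fbot : formula
| fand : formula -> formula -> formula
| f_or : formula -> formula -> formula
| fall : term -> formula -> formula
| fex : formula -> formula.

Definition cond : Type := (formula * formula)%type.

Definition eqf (s t : term) := fatom (sEq V) [s; t].
Definition neqf (s t : term) := fatom (sNeq V) [s; t].
Definition inf (s t : term) := fatom (sIn V) [s; t].
Definition ninf (s t : term) := fatom (sNin V) [s; t].

Fixpoint wf_term (k : nat) (t : term) : Prop :=
  match t with
  | fvar _ => True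
  | bvar n => n < k
  | tapp f ts => length ts = far V f /\
      (fix wfl (l : list term) : Prop :=
         match l with [] => True | u :: l' => wf_term k u /\ wfl l' end) ts
  end.

Fixpoint wf_form (k : nat) (phi : formula) : Prop :=
  match phi with
  | fatom p ts => length ts = par V p /\ Forall (wf_term k) ts
  | ftop | fbot => True
  | fand a b | f_or a b => wf_form k a /\ wf_form k b
  | fall t a => wf_term k t /\ wf_form (S k) a
  | fex a => wf_form (S k) a
  end.

Definition sigma_formula (phi : formula) : Prop := wf_form 0 phi.

Fixpoint tlift (k : nat) (t : term) : term :=
  match t with
  | fvar v => fvar v
  | bvar n => if n <? k then bvar n else bvar (S n)
  | tapp f ts => tapp f (map (tlift k) ts)
  end.

Fixpoint flift (k : nat) (phi : formula) : formula :=
  match phi with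
  | fatom p ts => fatom p (map (tlift k) ts)
  | ftop => ftop
  | fbot => fbot
  | fand a b => fand (flift k a) (flift k b)
  | f_or a b => f_or (flift k a) (flift k b)
  | fall t a => fall (tlift k t) (flift (S k) a)
  | fex a => fex (flift (S k) a)
  end.

Fixpoint tinst (k : nat) (u : term) (t : term) : term :=
  match t with
  | fvar v => fvar v
  | bvar n => if n <? k then bvar n else if n =? k then u else bvar (pred n)
  | tapp f ts => tapp f (map (tinst k u) ts)
  end.

Fixpoint finst (k : nat) (u : term) (phi : formula) : formula :=
  match phi with
  | fatom p ts => fatom p (map (tinst k u) ts)
  | ftop => ftop
  | fbot => fbot
  | fand a b => fand (finst k u a) (finst k u b)
  | f_or a b => f_or (finst k u a) (finst k u b)
  | fall t a => fall (tinst k u t) (finst (S k) (tlift 0 u) a)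
  | fex a => fex (finst (S k) (tlift 0 u) a)
  end.

(* phi^x_t where phi is the body of a binder on x *)
Definition open (phi : formula) (t : term) : formula := finst 0 t phi.

Fixpoint tpsubst (sg : nat -> term) (t : term) : term :=
  match t with
  | fvar v => sg v
  | bvar n => bvar n
  | tapp f ts => tapp f (map (tpsubst sg) ts)
  end.

Fixpoint fpsubst (sg : nat -> term) (phi : formula) : formula :=
  match phi with
  | fatom p ts => fatom p (map (tpsubst sg) ts)
  | ftop => ftop
  | fbot => fbot
  | fand a b => fand (fpsubst sg a) (fpsubst sg b)
  | f_or a b => f_or (fpsubst sg a) (fpsubst sg b)
  | fall t a => fall (tpsubst sg t) (fpsubst (fun v => tlift 0 (sg v)) a)
  | fex a => fex (fpsubst (fun v => tlift 0 (sg v)) a)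
  end.

Definition fsubst1 (a : nat) (s : term) (phi : formula) : formula :=
  fpsubst (fun v => if v =? a then s else fvar v) phi.

(* Formulas and terms may contain
   bound variables of an enclosing context (dangling de Bruijn indices);
   side conditions "y not free in psi" are expressed by lifting. *)
Inductive logax : formula -> formula -> Prop :=
| L1 phi : logax phi ftop
| L2 psi : logax fbot psi
| L3 phi psi : logax (fand phi psi) phi
| L4 phi psi : logax (fand phi psi) psi
| L5 phi : logax phi (fand phi phi)
| L6 phi psi : logax phi (f_or phi psi)
| L7 phi psi : logax psi (f_or phi psi)
| L8 psi : logax (f_or psi psi) psi
| L9 phi psi chi :
    logax (fand (f_or phi psi) chi) (f_or (fand phi chi) (fand psi chi))
| L10 phi t : logax (open phi t) (fex phi)
| L11 psi : logax (fex (flift 0 psi)) psi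
| L12 chi phi : logax (fand chi (fex phi)) (fex (fand (flift 0 chi) phi))
| L13 t s phi : logax (fand (inf t s) (fall s phi)) (open phi t)
| L14 psi s : logax psi (fall s (fand (flift 0 psi) (inf (bvar 0) (tlift 0 s))))
| L15 s chi phi : logax (fall s (f_or (flift 0 chi) phi)) (f_or chi (fall s phi))
| L16 s t : logax ftop (f_or (inf s t) (ninf s t))
| L17 s t : logax (fand (inf s t) (ninf s t)) fbot
| L18 s t : logax ftop (f_or (eqf s t) (neqf s t))
| L19 s t : logax (fand (eqf s t) (neqf s t)) fbot
| L20 t : logax ftop (eqf t t)
| L21 s t : logax (eqf s t) (eqf t s)
| L22 r s t : logax (fand (eqf r s) (eqf s t)) (eqf r t)
| L23 s t a phi : logax (fand (eqf s t) (fsubst1 a s phi)) (fsubst1 a t phi).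

(* Applications of the axioms of T: substitution instances (terms may
   contain variables bound in the ambient formula). *)
Definition axinst (T : cond -> Prop) (a b : formula) : Prop :=
  logax a b \/
  exists c sg, T c /\ a = fpsubst sg (fst c) /\ b = fpsubst sg (snd c).

Inductive ctx : Type :=
| hole : ctx
| cand_l : ctx -> formula -> ctx
| cand_r : formula -> ctx -> ctx
| cor_l : ctx -> formula -> ctx
| cor_r : formula -> ctx -> ctx
| call : term -> ctx -> ctx
| cex : ctx -> ctx.

Fixpoint plug (C : ctx) (phi : formula) : formula :=
  match C with
  | hole => phi
  | cand_l C' b => fand (plug C' phi) b
  | cand_r a C' => fand a (plug C' phi)
  | cor_l C' b => f_or (plug C' phi) b
  | cor_r a C' => f_or a (plug C' phi)
  | call t C' => fall t (plug C' phi)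
  | cex C' => fex (plug C' phi)
  end.

(* (chi0, chi1) is an application of some axiom (deep inference) *)
Definition step (T : cond -> Prop) (chi0 chi1 : formula) : Prop :=
  exists C a b, axinst T a b /\ chi0 = plug C a /\ chi1 = plug C b.

Inductive proves (T : cond -> Prop) : formula -> formula -> Prop :=
| pr_refl chi : sigma_formula chi -> proves T chi chi
| pr_step chi0 chi1 chi' :
    sigma_formula chi0 -> step T chi0 chi1 -> proves T chi1 chi' -> proves T chi0 chi'.

Record structure := Structure {
  dom : Type;
  funI : fsym V -> list dom -> dom;
  predI : psym V -> list dom -> Prop
}.

Definition admissible (M : structure) : Prop :=
  (forall a b : dom M, predI M (sEq V) [a; b] <-> a = b) /\
  (forall a b : dom M, predI M (sNeq V) [a; b] <-> a <> b) /\
  (forall a b : dom M, predI M (sNin V) [a; b] <-> ~ predI M (sIn V) [a; b]).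

Definition scons {D : Type} (d : D) (be : nat -> D) : nat -> D :=
  fun n => match n with 0 => d | S m => be m end.

Fixpoint teval (M : structure) (rho be : nat -> dom M) (t : term) : dom M :=
  match t with
  | fvar v => rho v
  | bvar n => be n
  | tapp f ts => funI M f (map (teval M rho be) ts)
  end.

Fixpoint sat (M : structure) (rho be : nat -> dom M) (phi : formula) : Prop :=
  match phi with
  | fatom p ts => predI M p (map (teval M rho be) ts)
  | ftop => True
  | fbot => False
  | fand a b => sat M rho be a /\ sat M rho be b
  | f_or a b => sat M rho be a \/ sat M rho be b
  | fall t a => forall d : dom M, predI M (sIn V) [d; teval M rho be t] ->
                  sat M rho (scons d be) a
  | fex a => exists d : dom M, sat M rho (scons d be) a
  end.

Definition models (M : structure) (c : cond) : Prop :=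
  forall rho be : nat -> dom M, sat M rho be (fst c) -> sat M rho be (snd c).

End Syntax.

Arguments fvar {V}. Arguments bvar {V}.

From Stdlib Require Import List Arith PeanoNat Lia Cantor.
From Stdlib Require Import Classical ClassicalEpsilon ProofIrrelevance.
From Stdlib Require Import FunctionalExtensionality PropExtensionality.
Import ListNotations.

(* If chi => chi' is unprovable, enumerate all Sigma formulas and grow the pair
   (chi, chi') into a pair (Gamma, Delta) such that no formula of Gamma proves one
   of Delta: each formula joins Gamma if that keeps the pair apart and Delta
   otherwise, and by the cut rule one of the two always works.  An existential
   entering Gamma, or a bounded universal entering Delta, brings along a fresh
   free variable as witness; (L11)/(L12) and (L14)/(L15) show that this is
   harmless.  Gamma is then a prime theory with witnesses, and the closed terms
   modulo Gamma's equality form a term model in which exactly the formulas of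
   Gamma hold: (L16)-(L19) make it admissible, and since Gamma is closed under
   substitution instances of T it is a model of T. *)

Arguments tapp {V}. Arguments fatom {V}. Arguments ftop {V}. Arguments fbot {V}.
Arguments fand {V}. Arguments f_or {V}. Arguments fall {V}. Arguments fex {V}.
Arguments eqf {V}. Arguments neqf {V}. Arguments inf {V}. Arguments ninf {V}.
Arguments wf_term {V}. Arguments wf_form {V}. Arguments sigma_formula {V}.
Arguments tlift {V}. Arguments flift {V}. Arguments tinst {V}. Arguments finst {V}.
Arguments open {V}. Arguments tpsubst {V}. Arguments fpsubst {V}. Arguments fsubst1 {V}.
Arguments logax {V}. Arguments axinst {V}. Arguments step {V}. Arguments proves {V}.
Arguments hole {V}. Arguments cand_l {V}. Arguments cand_r {V}. Arguments cor_l {V}.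
Arguments cor_r {V}. Arguments call {V}. Arguments cex {V}. Arguments plug {V}.
Arguments teval {V}. Arguments sat {V}. Arguments models {V}. Arguments admissible {V}.
Arguments funI {V}. Arguments predI {V}. Arguments dom {V}.
Arguments L1 {V}. Arguments L2 {V}. Arguments L3 {V}. Arguments L4 {V}. Arguments L5 {V}.
Arguments L6 {V}. Arguments L7 {V}. Arguments L8 {V}. Arguments L9 {V}. Arguments L10 {V}.
Arguments L11 {V}. Arguments L12 {V}. Arguments L13 {V}. Arguments L14 {V}. Arguments L15 {V}.
Arguments L16 {V}. Arguments L17 {V}. Arguments L18 {V}. Arguments L19 {V}. Arguments L20 {V}.
Arguments L21 {V}. Arguments L22 {V}. Arguments L23 {V}.
Arguments pr_refl {V}. Arguments pr_step {V}.

Definition term_ind_list (V : vocab) (P : term V -> Prop)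
  (Hf : forall v, P (fvar v)) (Hb : forall n, P (bvar n))
  (Ha : forall f ts, Forall P ts -> P (tapp f ts)) : forall t, P t :=
  fix F t := match t with
  | fvar v => Hf v | bvar n => Hb n
  | tapp f ts => Ha f ts ((fix G l := match l return Forall P l with
       | [] => Forall_nil _ | x :: l' => Forall_cons _ (F x) (G l') end) ts)
  end.

Lemma map_id_Forall {A} (f : A -> A) l : Forall (fun x => f x = x) l -> map f l = l.
Proof. induction 1; simpl; f_equal; auto. Qed.

Lemma list_max_ge_In l x : In x l -> x <= list_max l.
Proof.
  intros Hx. assert (H : list_max l <= list_max l) by lia.
  apply list_max_le in H. rewrite Forall_forall in H. auto.
Qed.

Ltac nat_cases := repeat match goal with
  | |- context [?a <? ?b] => destruct (Nat.ltb_spec a b)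
  | |- context [?a =? ?b] => destruct (Nat.eqb_spec a b)
  end.

Notation up sg := (fun v => tlift 0 (sg v)).

(** * Substitution and well-formedness *)

Section Substitution.
Context {V : vocab}.
Implicit Types (t u x : term V) (phi : formula V) (sg : nat -> term V).

Lemma wf_term_app k f (ts : list (term V)) :
  wf_term k (tapp f ts) <-> length ts = far V f /\ Forall (wf_term k) ts.
Proof.
  simpl. split; intros [Hl Hts]; split; auto; clear Hl; induction ts; simpl in *.
  - constructor.
  - destruct Hts; constructor; auto.
  - auto.
  - inversion Hts; subst; split; [assumption | apply IHts; assumption].
Qed.

Lemma tlift_tlift x : forall j k, j <= k ->
  tlift j (tlift k x) = tlift (S k) (tlift j x).
Proof.
  induction x using term_ind_list; intros j k Hjk; simpl.
  - reflexivity.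
  - nat_cases; simpl; nat_cases; simpl; try reflexivity; try lia; nat_cases; try lia; reflexivity.
  - f_equal. rewrite !map_map. apply map_ext_Forall.
    eapply Forall_impl; [|exact H]. intros a Ha. simpl. auto.
Qed.

Lemma tpsubst_ext x : forall sg sg', (forall v, sg v = sg' v) ->
  tpsubst sg x = tpsubst sg' x.
Proof.
  induction x using term_ind_list; intros sg sg' E; simpl; auto.
  f_equal. apply map_ext_Forall. eapply Forall_impl; [|exact H]. auto.
Qed.

Lemma fpsubst_ext phi : forall sg sg', (forall v, sg v = sg' v) ->
  fpsubst sg phi = fpsubst sg' phi.
Proof.
  induction phi; intros sg sg' E; simpl; f_equal; auto using tpsubst_ext.
  - apply map_ext. intros; apply tpsubst_ext; auto.
  - apply IHphi. intros; rewrite E; auto.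
  - apply IHphi. intros; rewrite E; auto.
Qed.

Lemma tpsubst_tlift x : forall k sg,
  tpsubst (fun v => tlift k (sg v)) (tlift k x) = tlift k (tpsubst sg x).
Proof.
  induction x using term_ind_list; intros k sg; simpl; auto.
  - nat_cases; reflexivity.
  - f_equal. rewrite !map_map. apply map_ext_Forall. eapply Forall_impl; [|exact H].
    intros a Ha. simpl. auto.
Qed.

Lemma fpsubst_flift phi : forall k sg,
  fpsubst (fun v => tlift k (sg v)) (flift k phi) = flift k (fpsubst sg phi).
Proof.
  induction phi; intros k sg; simpl; f_equal; auto using tpsubst_tlift.
  - rewrite !map_map. apply map_ext. intros; apply tpsubst_tlift.
  - rewrite <- IHphi. apply fpsubst_ext. intros v. apply tlift_tlift. lia.
  - rewrite <- IHphi. apply fpsubst_ext. intros v. apply tlift_tlift. lia.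
Qed.

Lemma tpsubst_comp x : forall sg1 sg2,
  tpsubst sg2 (tpsubst sg1 x) = tpsubst (fun v => tpsubst sg2 (sg1 v)) x.
Proof.
  induction x using term_ind_list; intros; simpl; auto.
  f_equal. rewrite map_map. apply map_ext_Forall. eapply Forall_impl; [|exact H]. auto.
Qed.

Lemma fpsubst_comp phi : forall sg1 sg2,
  fpsubst sg2 (fpsubst sg1 phi) = fpsubst (fun v => tpsubst sg2 (sg1 v)) phi.
Proof.
  induction phi; intros; simpl; f_equal; auto using tpsubst_comp.
  - rewrite map_map. apply map_ext. intros; apply tpsubst_comp.
  - rewrite IHphi. apply fpsubst_ext. intros v. apply tpsubst_tlift.
  - rewrite IHphi. apply fpsubst_ext. intros v. apply tpsubst_tlift.
Qed.

Fixpoint bvars_ge (k : nat) (t : term V) : Prop :=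
  match t with
  | fvar _ => True
  | bvar n => k <= n
  | tapp f ts => (fix g (l : list (term V)) : Prop :=
       match l with [] => True | u :: l' => bvars_ge k u /\ g l' end) ts
  end.

Lemma bvars_ge_app k f (ts : list (term V)) :
  bvars_ge k (tapp f ts) <-> Forall (bvars_ge k) ts.
Proof.
  simpl. split; intros H; induction ts; simpl in *.
  - constructor.
  - destruct H; constructor; auto.
  - auto.
  - inversion H; subst; split; [assumption | apply IHts; assumption].
Qed.

Lemma bvars_ge0 x : bvars_ge 0 x.
Proof.
  induction x using term_ind_list; simpl; try lia; auto. apply bvars_ge_app; auto.
Qed.

Lemma bvars_ge_tlift x k : bvars_ge k x -> bvars_ge (S k) (tlift 0 x).
Proof.
  revert k; induction x using term_ind_list; intros k Hb.
  - exact I.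
  - simpl in *; lia.
  - change (bvars_ge (S k) (tapp f (map (tlift 0) ts))).
    apply bvars_ge_app. apply bvars_ge_app in Hb. rewrite Forall_forall in *.
    intros y Hy. apply in_map_iff in Hy. destruct Hy as [z [<- Hz]]. auto.
Qed.

Lemma tinst_tlift_bvars_ge x k w : bvars_ge k x -> tinst k w (tlift 0 x) = x.
Proof.
  revert k; induction x using term_ind_list; intros k Hb.
  - reflexivity.
  - cbn -[Nat.ltb Nat.eqb] in *; nat_cases; try lia; cbn -[Nat.ltb Nat.eqb];
      nat_cases; try lia. f_equal; lia.
  - simpl. f_equal. apply bvars_ge_app in Hb. rewrite map_map. apply map_id_Forall.
    rewrite Forall_forall in *. auto.
Qed.

Lemma tpsubst_tinst t : forall k u sg, (forall v, bvars_ge k (sg v)) ->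
  tpsubst sg (tinst k u t) = tinst k (tpsubst sg u) (tpsubst (up sg) t).
Proof.
  induction t using term_ind_list; intros k u sg Hb; simpl.
  - rewrite tinst_tlift_bvars_ge; auto.
  - nat_cases; reflexivity.
  - f_equal. rewrite !map_map. apply map_ext_Forall. eapply Forall_impl; [|exact H].
    intros a Ha; auto.
Qed.

Lemma fpsubst_finst phi : forall k u sg, (forall v, bvars_ge k (sg v)) ->
  fpsubst sg (finst k u phi) = finst k (tpsubst sg u) (fpsubst (up sg) phi).
Proof.
  induction phi; intros k u sg Hb; simpl; f_equal; auto using tpsubst_tinst.
  - rewrite !map_map. apply map_ext. intros; apply tpsubst_tinst; auto.
  - rewrite IHphi by (intros v; apply bvars_ge_tlift; auto). f_equal. apply tpsubst_tlift.
  - rewrite IHphi by (intros v; apply bvars_ge_tlift; auto). f_equal. apply tpsubst_tlift.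
Qed.

Lemma fpsubst_open phi t sg :
  fpsubst sg (open phi t) = open (fpsubst (up sg) phi) (tpsubst sg t).
Proof. apply fpsubst_finst. intros; apply bvars_ge0. Qed.

Lemma wf_term_mono t : forall k k', k <= k' -> wf_term k t -> wf_term k' t.
Proof.
  induction t using term_ind_list; intros k k' Hk Hw.
  - exact I.
  - simpl in *; lia.
  - apply wf_term_app in Hw. apply wf_term_app. destruct Hw as [Hl Hw]. split; auto.
    rewrite Forall_forall in *. intros x Hx. eapply H; eauto.
Qed.

Lemma wf_form_mono phi : forall k k', k <= k' -> wf_form k phi -> wf_form k' phi.
Proof.
  induction phi; intros k k' Hk Hw; simpl in *; auto.
  - destruct Hw as [Hl Hw]; split; auto. eapply Forall_impl; [|exact Hw].
    intros; eapply wf_term_mono; eauto.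
  - destruct Hw; split; eauto.
  - destruct Hw; split; eauto.
  - destruct Hw; split. eapply wf_term_mono; eauto. eapply IHphi; [|eauto]; lia.
  - eapply IHphi; [|eauto]; lia.
Qed.

Lemma wf_tlift t : forall j k, wf_term k t -> wf_term (S k) (tlift j t).
Proof.
  induction t using term_ind_list; intros j k Hw.
  - exact I.
  - simpl in *. nat_cases; simpl; lia.
  - apply wf_term_app in Hw. apply wf_term_app. destruct Hw as [Hl Hw].
    rewrite length_map. split; auto.
    rewrite Forall_forall in *. intros x Hx. apply in_map_iff in Hx.
    destruct Hx as [y [<- Hy]]. eapply H; eauto.
Qed.

Lemma wf_tpsubst t : forall k sg, wf_term k t -> (forall v, wf_term k (sg v)) ->
  wf_term k (tpsubst sg t).
Proof.
  induction t using term_ind_list; intros k sg Hw Hs; simpl; auto.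
  apply wf_term_app in Hw. apply wf_term_app. destruct Hw as [Hl Hw].
  rewrite length_map. split; auto.
  rewrite Forall_forall in *. intros x Hx. apply in_map_iff in Hx.
  destruct Hx as [y [<- Hy]]. eapply H; eauto.
Qed.

Lemma wf_fpsubst phi : forall k sg, wf_form k phi ->
  (forall v, wf_term k (sg v)) -> wf_form k (fpsubst sg phi).
Proof.
  induction phi; intros k sg Hw Hs; simpl in *; auto.
  - destruct Hw as [Hl Hw]; rewrite length_map; split; auto.
    rewrite Forall_forall in *. intros x Hx. apply in_map_iff in Hx.
    destruct Hx as [y [<- Hy]]. apply wf_tpsubst; auto.
  - destruct Hw; split; eauto.
  - destruct Hw; split; eauto.
  - destruct Hw; split. apply wf_tpsubst; auto. apply IHphi; auto.
    intros; apply wf_tlift; auto.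
  - apply IHphi; auto. intros; apply wf_tlift; auto.
Qed.

Lemma wf_tinst t : forall k m u, wf_term (S m) t -> k <= m -> wf_term m u ->
  wf_term m (tinst k u t).
Proof.
  induction t using term_ind_list; intros k m u Hw Hk Hu.
  - exact I.
  - simpl in *. nat_cases; simpl; auto; lia.
  - apply wf_term_app in Hw. apply wf_term_app. destruct Hw as [Hl Hw].
    rewrite length_map. split; auto.
    rewrite Forall_forall in *. intros x Hx. apply in_map_iff in Hx.
    destruct Hx as [y [<- Hy]]. eapply H; eauto.
Qed.

Lemma wf_finst phi : forall k m u, wf_form (S m) phi -> k <= m -> wf_term m u ->
  wf_form m (finst k u phi).
Proof.
  induction phi; intros k m u Hw Hk Hu; simpl in *; auto.
  - destruct Hw as [Hl Hw]; rewrite length_map; split; auto.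
    rewrite Forall_forall in *. intros x Hx. apply in_map_iff in Hx.
    destruct Hx as [y [<- Hy]]. apply wf_tinst; auto.
  - destruct Hw; split; eauto.
  - destruct Hw; split; eauto.
  - destruct Hw; split. apply wf_tinst; auto. apply IHphi; auto. lia. apply wf_tlift; auto.
  - apply IHphi; auto. lia. apply wf_tlift; auto.
Qed.

Lemma sigma_open phi u : wf_form 1 phi -> wf_term 0 u -> sigma_formula (open phi u).
Proof. intros; apply wf_finst; auto. Qed.

Lemma tlift_wf t : forall k, wf_term k t -> tlift k t = t.
Proof.
  induction t using term_ind_list; intros k Hw; auto.
  - simpl in *. nat_cases; auto; lia.
  - apply wf_term_app in Hw. destruct Hw as [_ Hw]. simpl. f_equal.
    apply map_id_Forall. rewrite Forall_forall in *. auto.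
Qed.

Lemma flift_wf phi : forall k, wf_form k phi -> flift k phi = phi.
Proof.
  induction phi; intros k Hw; simpl in *.
  - destruct Hw as [_ Hw]. f_equal. apply map_id_Forall. eapply Forall_impl; [|exact Hw].
    intros; apply tlift_wf; auto.
  - reflexivity.
  - reflexivity.
  - destruct Hw; f_equal; auto.
  - destruct Hw; f_equal; auto.
  - destruct Hw; f_equal; auto. apply tlift_wf; auto.
  - f_equal; auto.
Qed.

Lemma tinst_bvar_wf t : forall k, wf_term (S k) t -> tinst k (bvar k) t = t.
Proof.
  induction t using term_ind_list; intros k Hw; auto.
  - simpl in *. nat_cases; subst; auto; lia.
  - apply wf_term_app in Hw. destruct Hw as [_ Hw]. simpl. f_equal.
    apply map_id_Forall. rewrite Forall_forall in *. auto.
Qed.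

Lemma finst_bvar_wf phi : forall k, wf_form (S k) phi -> finst k (bvar k) phi = phi.
Proof.
  induction phi; intros k Hw; simpl in *.
  - destruct Hw as [_ Hw]. f_equal. apply map_id_Forall. eapply Forall_impl; [|exact Hw].
    intros; apply tinst_bvar_wf; auto.
  - reflexivity.
  - reflexivity.
  - destruct Hw; f_equal; auto.
  - destruct Hw; f_equal; auto.
  - destruct Hw; f_equal. apply tinst_bvar_wf; auto. simpl. nat_cases; try lia. auto.
  - f_equal. simpl. nat_cases; try lia. auto.
Qed.

(* [tfv_bound t] is a strict upper bound on the free variables of [t]. *)
Fixpoint tfv_bound (t : term V) : nat :=
  match t with
  | fvar v => S v
  | bvar _ => 0
  | tapp f ts => (fix g (l : list (term V)) : nat :=
       match l with [] => 0 | u :: l' => max (tfv_bound u) (g l') end) ts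
  end.

Lemma tfv_bound_app f (ts : list (term V)) :
  tfv_bound (tapp f ts) = list_max (map tfv_bound ts).
Proof. simpl. induction ts; simpl; auto. Qed.

Lemma tfv_bound_In x ts : In x ts -> tfv_bound x <= list_max (map tfv_bound ts).
Proof. intros Hx. apply list_max_ge_In, in_map; auto. Qed.

Fixpoint ffv_bound (phi : formula V) : nat :=
  match phi with
  | fatom p ts => list_max (map tfv_bound ts)
  | ftop | fbot => 0
  | fand a b | f_or a b => max (ffv_bound a) (ffv_bound b)
  | fall t a => max (tfv_bound t) (ffv_bound a)
  | fex a => ffv_bound a
  end.

Lemma tpsubst_agree t : forall sg sg', (forall v, v < tfv_bound t -> sg v = sg' v) ->
  tpsubst sg t = tpsubst sg' t.
Proof.
  induction t using term_ind_list; intros sg sg' E.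
  - simpl in *; auto.
  - reflexivity.
  - rewrite tfv_bound_app in E. simpl. f_equal. apply map_ext_Forall.
    rewrite Forall_forall in *. intros x Hx. apply H; auto.
    intros v Hv. apply E. pose proof (tfv_bound_In x ts Hx). lia.
Qed.

Lemma fpsubst_agree phi : forall sg sg', (forall v, v < ffv_bound phi -> sg v = sg' v) ->
  fpsubst sg phi = fpsubst sg' phi.
Proof.
  induction phi; intros sg sg' E; simpl in *; f_equal.
  - apply map_ext_in. intros x Hx. apply tpsubst_agree. intros v Hv. apply E.
    pose proof (tfv_bound_In x l Hx). lia.
  - apply IHphi1; intros; apply E; lia.
  - apply IHphi2; intros; apply E; lia.
  - apply IHphi1; intros; apply E; lia.
  - apply IHphi2; intros; apply E; lia.
  - apply tpsubst_agree; intros; apply E; lia.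
  - apply IHphi; intros; rewrite E; auto; lia.
  - apply IHphi; intros; rewrite E; auto; lia.
Qed.

Lemma tpsubst_id t : tpsubst fvar t = t.
Proof.
  induction t using term_ind_list; simpl; auto. f_equal. apply map_id_Forall; auto.
Qed.

Lemma fpsubst_id phi : fpsubst fvar phi = phi.
Proof.
  induction phi; simpl; f_equal; auto using tpsubst_id.
  apply map_id_Forall. rewrite Forall_forall; intros; apply tpsubst_id.
Qed.

Lemma tpsubst_fresh t sg : (forall v, v < tfv_bound t -> sg v = fvar v) -> tpsubst sg t = t.
Proof. intros H. rewrite <- (tpsubst_id t) at 2. apply tpsubst_agree; auto. Qed.

Lemma fpsubst_fresh phi sg : (forall v, v < ffv_bound phi -> sg v = fvar v) ->
  fpsubst sg phi = phi.
Proof. intros H. rewrite <- (fpsubst_id phi) at 2. apply fpsubst_agree; auto. Qed.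

Fixpoint max_below (f : nat -> nat) (n : nat) : nat :=
  match n with 0 => 0 | S n => max (f n) (max_below f n) end.

Lemma max_below_ge f n v : v < n -> f v <= max_below f n.
Proof.
  induction n; simpl; intros; [lia|].
  destruct (Nat.eq_dec v n); subst; [lia|]. specialize (IHn ltac:(lia)); lia.
Qed.

(* Renaming the replaced variable [a] of (L23) to a variable [a'] beyond every
   free variable of the substituted terms commutes the substitution past it. *)
Lemma L23_fpsubst (s t : term V) a phi sg :
  logax (fpsubst sg (fand (eqf s t) (fsubst1 a s phi))) (fpsubst sg (fsubst1 a t phi)).
Proof.
  set (a' := max_below (fun v => tfv_bound (sg v)) (ffv_bound phi)).
  set (phi' := fpsubst (fun v => if v =? a then fvar a' else sg v) phi).
  assert (Key : forall u, fpsubst sg (fsubst1 a u phi) = fsubst1 a' (tpsubst sg u) phi').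
  { intros u. unfold fsubst1, phi'. rewrite !fpsubst_comp. apply fpsubst_agree.
    intros v Hv. destruct (Nat.eqb_spec v a).
    - simpl. rewrite Nat.eqb_refl. reflexivity.
    - simpl. symmetry. apply tpsubst_fresh. intros w Hw.
      assert (tfv_bound (sg v) <= a') by (apply (max_below_ge (fun v => tfv_bound (sg v))); auto).
      destruct (Nat.eqb_spec w a'); [lia|reflexivity]. }
  change (fpsubst sg (fand (eqf s t) (fsubst1 a s phi))) with
    (fand (eqf (tpsubst sg s) (tpsubst sg t)) (fpsubst sg (fsubst1 a s phi))).
  rewrite !Key. apply L23.
Qed.

Lemma logax_fpsubst (a b : formula V) sg : logax a b -> logax (fpsubst sg a) (fpsubst sg b).
Proof.
  intros H. destruct H; simpl; try constructor.
  - rewrite fpsubst_open. apply L10.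
  - rewrite fpsubst_flift. apply L11.
  - rewrite fpsubst_flift. apply L12.
  - rewrite fpsubst_open. apply L13.
  - rewrite fpsubst_flift, tpsubst_tlift. apply L14.
  - rewrite fpsubst_flift. apply L15.
  - apply L23_fpsubst.
Qed.

Lemma axinst_fpsubst T (a b : formula V) sg :
  axinst T a b -> axinst T (fpsubst sg a) (fpsubst sg b).
Proof.
  intros [H|[c [sg0 [Hc [-> ->]]]]].
  - left; apply logax_fpsubst; auto.
  - right. exists c, (fun v => tpsubst sg (sg0 v)). rewrite !fpsubst_comp. auto.
Qed.

Fixpoint ctx_psubst (sg : nat -> term V) (C : ctx V) : ctx V :=
  match C with
  | hole => hole
  | cand_l C' b => cand_l (ctx_psubst sg C') (fpsubst sg b)
  | cand_r a C' => cand_r (fpsubst sg a) (ctx_psubst sg C')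
  | cor_l C' b => cor_l (ctx_psubst sg C') (fpsubst sg b)
  | cor_r a C' => cor_r (fpsubst sg a) (ctx_psubst sg C')
  | call t C' => call (tpsubst sg t) (ctx_psubst (up sg) C')
  | cex C' => cex (ctx_psubst (up sg) C')
  end.

(* the substitution as seen at the hole, below the binders of [C] *)
Fixpoint hole_psubst (sg : nat -> term V) (C : ctx V) : nat -> term V :=
  match C with
  | hole => sg
  | cand_l C' _ | cand_r _ C' | cor_l C' _ | cor_r _ C' => hole_psubst sg C'
  | call _ C' | cex C' => hole_psubst (up sg) C'
  end.

Lemma fpsubst_plug (C : ctx V) : forall sg phi,
  fpsubst sg (plug C phi) = plug (ctx_psubst sg C) (fpsubst (hole_psubst sg C) phi).
Proof. induction C; intros; simpl; f_equal; auto. Qed.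

Fixpoint ctx_comp (C D : ctx V) : ctx V :=
  match C with
  | hole => D
  | cand_l C' b => cand_l (ctx_comp C' D) b
  | cand_r a C' => cand_r a (ctx_comp C' D)
  | cor_l C' b => cor_l (ctx_comp C' D) b
  | cor_r a C' => cor_r a (ctx_comp C' D)
  | call t C' => call t (ctx_comp C' D)
  | cex C' => cex (ctx_comp C' D)
  end.

Lemma plug_comp (C D : ctx V) phi : plug C (plug D phi) = plug (ctx_comp C D) phi.
Proof. induction C; simpl; f_equal; auto. Qed.

Lemma step_fpsubst T (a b : formula V) sg : step T a b -> step T (fpsubst sg a) (fpsubst sg b).
Proof.
  intros [C [x [y [Hxy [-> ->]]]]].
  exists (ctx_psubst sg C), (fpsubst (hole_psubst sg C) x), (fpsubst (hole_psubst sg C) y).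
  split; [apply axinst_fpsubst; auto|]. split; apply fpsubst_plug.
Qed.

Lemma step_plug T (a b : formula V) C : step T a b -> step T (plug C a) (plug C b).
Proof.
  intros [D [x [y [Hxy [-> ->]]]]]. exists (ctx_comp C D), x, y. rewrite !plug_comp. auto.
Qed.

End Substitution.

(** * Chains and derived rules *)

(* A chain at depth [k] is a positivistic proof whose formulas may mention the
   bound variables [0 .. k-1] of an enclosing context. *)
Inductive chain {V} (T : cond V -> Prop) (k : nat) : formula V -> formula V -> Prop :=
| ch_refl a : wf_form k a -> chain T k a a
| ch_step a b c : wf_form k a -> step T a b -> chain T k b c -> chain T k a c.

Notation der T := (chain T 0).

Section Chains.
Context {V : vocab} (T : cond V -> Prop).
Implicit Types (a b c d g : formula V).

Lemma chain_wf_l k a b : chain T k a b -> wf_form k a.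
Proof. destruct 1; auto. Qed.

Lemma chain_wf_r k a b : chain T k a b -> wf_form k b.
Proof. induction 1; auto. Qed.

Lemma proves_der a b : proves T a b <-> der T a b.
Proof.
  split; induction 1.
  - apply ch_refl; auto.
  - eapply ch_step; eauto.
  - apply pr_refl; auto.
  - eapply pr_step; eauto.
Qed.

Lemma chain_trans k a b c : chain T k a b -> chain T k b c -> chain T k a c.
Proof. induction 1; intros; auto. eapply ch_step; eauto. Qed.

Lemma chain_step k a b : wf_form k a -> wf_form k b -> step T a b -> chain T k a b.
Proof. intros; eapply ch_step; eauto. apply ch_refl; auto. Qed.

Lemma chain_logax k a b : wf_form k a -> wf_form k b -> logax a b -> chain T k a b.
Proof. intros. apply chain_step; auto. exists hole, a, b. split; [left; auto|auto]. Qed.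

Lemma chain_plug k j C a b : chain T k a b ->
  (forall x, wf_form k x -> wf_form j (plug C x)) -> chain T j (plug C a) (plug C b).
Proof.
  induction 1; intros HC.
  - apply ch_refl; auto.
  - eapply ch_step; eauto. apply step_plug; auto.
Qed.

Lemma chain_fpsubst k j a b sg : chain T k a b -> k <= j ->
  (forall v, wf_term j (sg v)) -> chain T j (fpsubst sg a) (fpsubst sg b).
Proof.
  induction 1; intros Hk Hs.
  - apply ch_refl. apply wf_fpsubst; auto. eapply wf_form_mono; eauto.
  - eapply ch_step; eauto. apply wf_fpsubst; auto. eapply wf_form_mono; eauto.
    apply step_fpsubst; auto.
Qed.

Lemma der_sigma_l a b : der T a b -> sigma_formula a.
Proof. apply chain_wf_l. Qed.

Lemma der_sigma_r a b : der T a b -> sigma_formula b.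
Proof. apply chain_wf_r. Qed.

Lemma der_refl a : sigma_formula a -> der T a a.
Proof. apply ch_refl. Qed.

Lemma der_trans a b c : der T a b -> der T b c -> der T a c.
Proof. apply chain_trans. Qed.

Lemma der_logax a b : sigma_formula a -> sigma_formula b -> logax a b -> der T a b.
Proof. apply chain_logax. Qed.

Lemma der_and_l a b c : der T a b -> sigma_formula c -> der T (fand a c) (fand b c).
Proof. intros H Hc. apply (chain_plug _ _ (cand_l hole c) _ _ H). split; auto. Qed.

Lemma der_and_r a b c : der T a b -> sigma_formula c -> der T (fand c a) (fand c b).
Proof. intros H Hc. apply (chain_plug _ _ (cand_r c hole) _ _ H). split; auto. Qed.

Lemma der_or_l a b c : der T a b -> sigma_formula c -> der T (f_or a c) (f_or b c).
Proof. intros H Hc. apply (chain_plug _ _ (cor_l hole c) _ _ H). split; auto. Qed.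

Lemma der_or_r a b c : der T a b -> sigma_formula c -> der T (f_or c a) (f_or c b).
Proof. intros H Hc. apply (chain_plug _ _ (cor_r c hole) _ _ H). split; auto. Qed.

Lemma der_andE1 a b : sigma_formula a -> sigma_formula b -> der T (fand a b) a.
Proof. intros; apply der_logax; [split|..]; auto. apply L3. Qed.

Lemma der_andE2 a b : sigma_formula a -> sigma_formula b -> der T (fand a b) b.
Proof. intros; apply der_logax; [split|..]; auto. apply L4. Qed.

Lemma der_orI1 a b : sigma_formula a -> sigma_formula b -> der T a (f_or a b).
Proof. intros; apply der_logax; [|split|]; auto. apply L6. Qed.

Lemma der_orI2 a b : sigma_formula a -> sigma_formula b -> der T b (f_or a b).
Proof. intros; apply der_logax; [|split|]; auto. apply L7. Qed.

Lemma der_andI g a b : der T g a -> der T g b -> der T g (fand a b).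
Proof.
  intros Ha Hb. pose proof (der_sigma_l _ _ Ha) as Hg.
  eapply der_trans; [apply der_logax with (b := fand g g); [| split | apply L5]; exact Hg|].
  eapply der_trans; [apply (der_and_l _ _ _ Ha Hg)|].
  apply der_and_r; auto. eapply der_sigma_r; eauto.
Qed.

Lemma der_orE a b c : der T a c -> der T b c -> der T (f_or a b) c.
Proof.
  intros Ha Hb. pose proof (der_sigma_l _ _ Hb) as Hb'. pose proof (der_sigma_r _ _ Ha) as Hc.
  eapply der_trans; [apply (der_or_l _ _ _ Ha Hb')|].
  eapply der_trans; [apply (der_or_r _ _ _ Hb Hc)|].
  apply der_logax; [split| |apply L8]; auto.
Qed.

(* The cut rule, derived through the distributivity axiom (L9). *)
Lemma der_cut g f d : der T (fand g f) d -> der T g (f_or d f) -> der T g d.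
Proof.
  intros H1 H2. pose proof (der_sigma_l _ _ H2) as Hg.
  pose proof (der_sigma_r _ _ H2) as Hdf. destruct Hdf as [Hd Hf].
  eapply der_trans; [apply der_andI; [exact H2| apply der_refl; auto]|].
  eapply der_trans; [apply der_logax; [| |apply L9]; repeat split; auto|].
  apply der_orE.
  - apply der_andE1; auto.
  - eapply der_trans; [|exact H1]. apply der_andI; [apply der_andE2|apply der_andE1]; auto.
Qed.

End Chains.

(** * Henkin witnesses *)

Section Witnesses.
Context {V : vocab} (T : cond V -> Prop) (HaIn : par V (sIn V) = 2).
Implicit Types (g d phi psi : formula V) (s t : term V).

Lemma sigma_inf k s t : wf_term k s -> wf_term k t -> wf_form k (inf s t).
Proof. intros. split; [simpl; auto | repeat constructor; auto]. Qed.

Definition abstract_var (c : nat) : nat -> term V :=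
  fun v => if v =? c then bvar 0 else fvar v.

Lemma abstract_var_wf c v : wf_term 1 (abstract_var c v).
Proof. unfold abstract_var. destruct (v =? c); simpl; auto. Qed.

Lemma abstract_var_fresh c phi : ffv_bound phi <= c -> fpsubst (abstract_var c) phi = phi.
Proof.
  intros H. apply fpsubst_fresh. intros v Hv. unfold abstract_var.
  destruct (Nat.eqb_spec v c); auto; lia.
Qed.

Lemma abstract_var_fresh_term c t : tfv_bound t <= c -> tpsubst (abstract_var c) t = t.
Proof.
  intros H. apply tpsubst_fresh. intros v Hv. unfold abstract_var.
  destruct (Nat.eqb_spec v c); auto; lia.
Qed.

Lemma abstract_var_open c psi : ffv_bound psi <= c -> wf_form 1 psi ->
  fpsubst (abstract_var c) (open psi (fvar c)) = psi.
Proof.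
  intros H Hw. rewrite fpsubst_open. simpl. unfold abstract_var at 2. rewrite Nat.eqb_refl.
  rewrite fpsubst_fresh. apply finst_bvar_wf; auto.
  intros v Hv. unfold abstract_var. destruct (Nat.eqb_spec v c); auto; lia.
Qed.

(* A proof from the witness [psi(c)] abstracts to one under [exists], closed by (L12) and (L11). *)
Lemma ex_witness_consistent g d psi c : sigma_formula g -> sigma_formula d ->
  sigma_formula (fex psi) -> ffv_bound g <= c -> ffv_bound d <= c -> ffv_bound psi <= c ->
  ~ der T (fand g (fex psi)) d -> ~ der T (fand (fand g (fex psi)) (open psi (fvar c))) d.
Proof.
  intros Hg Hd Hp Hcg Hcd Hcp Hn H. apply Hn. set (g' := fand g (fex psi)) in *.
  assert (Hg' : sigma_formula g') by (split; auto).
  assert (Hc' : ffv_bound g' <= c) by (simpl; lia).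
  pose proof (chain_fpsubst _ 0 1 _ _ (abstract_var c) H ltac:(lia) (abstract_var_wf c)) as H1.
  change (fpsubst (abstract_var c) (fand g' (open psi (fvar c))))
    with (fand (fpsubst (abstract_var c) g') (fpsubst (abstract_var c) (open psi (fvar c)))) in H1.
  rewrite abstract_var_open, !abstract_var_fresh in H1 by auto.
  pose proof (chain_plug _ 1 0 (cex hole) _ _ H1 ltac:(intros; simpl; auto)) as H2. simpl in H2.
  eapply der_trans; [apply der_andI; [apply der_refl; auto | apply der_andE2; auto]|].
  eapply der_trans; [apply der_logax with (b := fex (fand g' psi)); [split; auto| |]|].
  - simpl. split; [|exact Hp]. apply wf_form_mono with 0; auto.
  - rewrite <- (flift_wf g' 0 Hg') at 2. apply L12.
  - eapply der_trans; [exact H2|].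
    apply der_logax; [exact (wf_form_mono d 0 1 ltac:(lia) Hd) | exact Hd |].
    rewrite <- (flift_wf d 0 Hd) at 1. apply L11.
Qed.

(* Dually, a proof with the witness [c in s] abstracts to one under [forall y in s],
   opened by (L14) and closed by (L15). *)
Lemma all_witness_consistent g d s psi c : sigma_formula g -> sigma_formula d ->
  sigma_formula (fall s psi) -> ffv_bound g <= c -> ffv_bound d <= c ->
  ffv_bound (fall s psi) <= c ->
  ~ der T g (f_or d (fall s psi)) ->
  ~ der T (fand g (inf (fvar c) s)) (f_or (f_or d (fall s psi)) (open psi (fvar c))).
Proof.
  intros Hg Hd Hp Hcg Hcd Hcp Hn H. apply Hn. set (phi := fall s psi) in *.
  set (d' := f_or d phi) in *. destruct Hp as [Hs Hpsi].
  assert (Hd' : sigma_formula d') by (split; auto; split; auto).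
  assert (Hc' : ffv_bound d' <= c) by (change (max (ffv_bound d) (ffv_bound phi) <= c); lia).
  unfold phi in Hcp; simpl in Hcp.
  pose proof (chain_fpsubst _ 0 1 _ _ (abstract_var c) H ltac:(lia) (abstract_var_wf c)) as H1.
  change (chain T 1
    (fand (fpsubst (abstract_var c) g)
          (fatom (sIn V) [abstract_var c c; tpsubst (abstract_var c) s]))
    (f_or (fpsubst (abstract_var c) d') (fpsubst (abstract_var c) (open psi (fvar c))))) in H1.
  rewrite abstract_var_open, !abstract_var_fresh, abstract_var_fresh_term in H1
    by first [lia | auto].
  unfold abstract_var at 1 in H1; rewrite Nat.eqb_refl in H1.
  pose proof (chain_plug _ 1 0 (call s hole) _ _ H1 ltac:(intros; simpl; auto)) as H2.
  simpl in H2.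
  eapply der_trans; [|eapply der_trans; [exact H2|]].
  - apply der_logax; auto.
    + split; auto. split. apply wf_form_mono with 0; auto. apply sigma_inf; simpl; auto.
      apply wf_term_mono with 0; auto.
    + rewrite <- (flift_wf g 0 Hg) at 2. rewrite <- (tlift_wf s 0 Hs) at 2. apply L14.
  - eapply der_trans; [apply der_logax with (b := f_or d' phi)|].
    + split; auto. split; auto. apply wf_form_mono with 0; auto.
    + split; auto. split; auto.
    + rewrite <- (flift_wf d' 0 Hd') at 1. apply L15.
    + apply der_orE. apply der_refl; auto. apply der_orI2; auto. split; auto.
Qed.

End Witnesses.

(** * Construction of a prime theory with witnesses *)

Record henkin_theory {V} (T : cond V -> Prop) (G : formula V -> Prop) : Prop := {
  ht_der : forall a b, G a -> der T a b -> G b;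
  ht_sigma : forall a, G a -> sigma_formula a;
  ht_and : forall a b, G a -> G b -> G (fand a b);
  ht_top : G ftop;
  ht_bot : ~ G fbot;
  ht_or : forall a b, G (f_or a b) -> G a \/ G b;
  ht_ex : forall psi, G (fex psi) -> exists c, G (open psi (fvar c));
  ht_all : forall s psi, sigma_formula (fall s psi) -> ~ G (fall s psi) ->
    exists c, G (inf (fvar c) s) /\ ~ G (open psi (fvar c))
}.

Section Construction.
Context {V : vocab} (T : cond V -> Prop) (HaIn : par V (sIn V) = 2)
  (enum : nat -> option (formula V)) (Henum : forall phi, exists n, enum n = Some phi)
  (g0 d0 : formula V) (Hg0 : sigma_formula g0) (Hd0 : sigma_formula d0)
  (Hnd0 : ~ der T g0 d0).
Implicit Types (g d phi psi : formula V) (p : formula V * formula V).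

Definition fresh_var g d phi := max (ffv_bound g) (max (ffv_bound d) (ffv_bound phi)).

Definition ex_body phi := match phi with fex psi => Some psi | _ => None end.
Definition all_parts phi := match phi with fall s psi => Some (s, psi) | _ => None end.

Lemma ex_body_spec phi psi : ex_body phi = Some psi -> phi = fex psi.
Proof. destruct phi; simpl; intros H; inversion H; auto. Qed.

Lemma all_parts_spec phi s psi : all_parts phi = Some (s, psi) -> phi = fall s psi.
Proof. destruct phi; simpl; intros H; inversion H; auto. Qed.

(* A pair [(g, d)] stands for Gamma = consequences of [g] and Delta = formulas proving [d]. *)
Definition extend p (o : option (formula V)) : formula V * formula V :=
  match o with
  | None => p
  | Some phi =>
    if excluded_middle_informative (sigma_formula phi) then
      let c := fresh_var (fst p) (snd p) phi in
      if excluded_middle_informative (der T (fand (fst p) phi) (snd p)) then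
        match all_parts phi with
        | Some (s, psi) => (fand (fst p) (inf (fvar c) s),
                           f_or (f_or (snd p) phi) (open psi (fvar c)))
        | None => (fst p, f_or (snd p) phi)
        end
      else
        match ex_body phi with
        | Some psi => (fand (fand (fst p) phi) (open psi (fvar c)), snd p)
        | None => (fand (fst p) phi, snd p)
        end
    else p
  end.

Definition consistent_pair p :=
  sigma_formula (fst p) /\ sigma_formula (snd p) /\ ~ der T (fst p) (snd p).

Lemma extend_consistent p o : consistent_pair p ->
  consistent_pair (extend p o) /\ der T (fst (extend p o)) (fst p) /\
  der T (snd p) (snd (extend p o)).
Proof.
  intros [Hg [Hd Hn]]. destruct p as [g d]. simpl in *. destruct o as [phi|].
  2:{ simpl. repeat split; auto; apply der_refl; auto. }
  simpl. destruct (excluded_middle_informative (sigma_formula phi)) as [Hp|Hp].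
  2:{ repeat split; auto; apply der_refl; auto. }
  destruct (excluded_middle_informative (der T (fand g phi) d)) as [Hdr|Hdr].
  - assert (Hn2 : ~ der T g (f_or d phi)) by (intro H; apply Hn; eapply der_cut; eauto).
    destruct (all_parts phi) as [[s psi]|] eqn:E.
    + apply all_parts_spec in E. subst phi. simpl.
      pose proof Hp as [Hs Hpsi].
      assert (Hi : sigma_formula (inf (fvar (fresh_var g d (fall s psi))) s))
        by (apply sigma_inf; simpl; auto).
      assert (Ho : sigma_formula (open psi (fvar (fresh_var g d (fall s psi)))))
        by (apply sigma_open; simpl; auto).
      refine (conj (conj _ (conj _ _)) (conj _ _)); simpl.
      * split; auto.
      * split; auto. split; auto.
      * apply all_witness_consistent; auto; unfold fresh_var; lia.
      * apply der_andE1; auto.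
      * eapply der_trans; apply der_orI1; auto. split; auto.
    + refine (conj (conj _ (conj _ _)) (conj _ _)); simpl; auto.
      split; auto. apply der_refl; auto. apply der_orI1; auto.
  - destruct (ex_body phi) as [psi|] eqn:E.
    + apply ex_body_spec in E. subst phi. simpl.
      assert (Ho : sigma_formula (open psi (fvar (fresh_var g d (fex psi)))))
        by (apply sigma_open; simpl; auto).
      refine (conj (conj _ (conj _ _)) (conj _ _)); simpl.
      * split; auto. split; auto.
      * auto.
      * apply ex_witness_consistent; auto; unfold fresh_var; simpl; lia.
      * eapply der_trans; apply der_andE1; auto. split; auto.
      * apply der_refl; auto.
    + refine (conj (conj _ (conj _ _)) (conj _ _)); simpl; auto.
      split; auto. apply der_andE1; auto. apply der_refl; auto.
Qed.

Lemma extend_decides p phi : consistent_pair p -> sigma_formula phi ->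
  (der T (fst (extend p (Some phi))) phi /\
     forall psi, phi = fex psi ->
       exists c, der T (fst (extend p (Some phi))) (open psi (fvar c)))
  \/ (der T phi (snd (extend p (Some phi))) /\
     forall s psi, phi = fall s psi ->
       exists c, der T (fst (extend p (Some phi))) (inf (fvar c) s) /\
                 der T (open psi (fvar c)) (snd (extend p (Some phi)))).
Proof.
  intros [Hg [Hd Hn]] Hp. destruct p as [g d]. simpl in *.
  destruct (excluded_middle_informative (sigma_formula phi)) as [_|Hp']; [|contradiction].
  destruct (excluded_middle_informative (der T (fand g phi) d)) as [Hdr|Hdr].
  - right. destruct (all_parts phi) as [[s psi]|] eqn:E.
    + apply all_parts_spec in E. subst phi. simpl.
      pose proof Hp as [Hs Hpsi].
      assert (Hi : sigma_formula (inf (fvar (fresh_var g d (fall s psi))) s))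
        by (apply sigma_inf; simpl; auto).
      assert (Ho : sigma_formula (open psi (fvar (fresh_var g d (fall s psi)))))
        by (apply sigma_open; simpl; auto).
      split.
      * eapply der_trans; [apply der_orI2|apply der_orI1]; auto. split; auto.
      * intros s' psi' Heq. inversion Heq; subst. exists (fresh_var g d (fall s' psi')).
        split. apply der_andE2; auto. apply der_orI2; auto. split; auto.
    + simpl. split. apply der_orI2; auto. intros s psi ->. discriminate.
  - left. destruct (ex_body phi) as [psi|] eqn:E.
    + apply ex_body_spec in E. subst phi. simpl.
      assert (Ho : sigma_formula (open psi (fvar (fresh_var g d (fex psi)))))
        by (apply sigma_open; simpl; auto).
      split.
      * eapply der_trans; [apply der_andE1|apply der_andE2]; auto. split; auto.
      * intros psi' Heq. inversion Heq; subst. exists (fresh_var g d (fex psi')).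
        apply der_andE2; auto. split; auto.
    + simpl. split. apply der_andE2; auto. intros psi ->. discriminate.
Qed.

Fixpoint pair_at (n : nat) : formula V * formula V :=
  match n with 0 => (g0, d0) | S n => extend (pair_at n) (enum n) end.

Lemma pair_at_consistent n : consistent_pair (pair_at n).
Proof. induction n; simpl. repeat split; auto. apply extend_consistent; auto. Qed.

Lemma pair_at_mono m n : m <= n ->
  der T (fst (pair_at n)) (fst (pair_at m)) /\ der T (snd (pair_at m)) (snd (pair_at n)).
Proof.
  destruct (pair_at_consistent m) as [Hg [Hd _]].
  induction 1 as [|n _ [IHg IHd]]; [split; apply der_refl; auto|].
  destruct (extend_consistent _ (enum n) (pair_at_consistent n)) as [_ [Hg' Hd']].
  split; eapply der_trans; eauto.
Qed.

Definition Gamma phi := exists n, der T (fst (pair_at n)) phi.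
Definition Delta phi := exists n, der T phi (snd (pair_at n)).

Lemma Gamma_Delta_disjoint phi : Gamma phi -> Delta phi -> False.
Proof.
  intros [m Hm] [n Hn]. destruct (pair_at_consistent (max m n)) as [_ [_ Hc]]. apply Hc.
  eapply der_trans; [apply (pair_at_mono m); lia|]. eapply der_trans; [exact Hm|].
  eapply der_trans; [exact Hn|]. apply pair_at_mono; lia.
Qed.

Lemma Gamma_g0 : Gamma g0.
Proof. exists 0. apply der_refl; auto. Qed.

Lemma Gamma_not_d0 : ~ Gamma d0.
Proof. intros H. apply (Gamma_Delta_disjoint d0 H). exists 0. apply der_refl; auto. Qed.

Lemma Gamma_or_Delta phi : sigma_formula phi -> Gamma phi \/ Delta phi.
Proof.
  intros Hp. destruct (Henum phi) as [n En].
  destruct (extend_decides (pair_at n) phi (pair_at_consistent n) Hp) as [[H _]|[H _]];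
    [left|right]; exists (S n); simpl; rewrite En; auto.
Qed.

Lemma Gamma_henkin : henkin_theory T Gamma.
Proof.
  assert (Gup : forall a b, Gamma a -> der T a b -> Gamma b).
  { intros a b [n H] Hb. exists n. eapply der_trans; eauto. }
  assert (Gsig : forall a, Gamma a -> sigma_formula a).
  { intros a [n H]. eapply der_sigma_r; eauto. }
  split; auto.
  - intros a b [m Hm] [n Hn]. exists (max m n). apply der_andI;
      (eapply der_trans; [apply pair_at_mono|]; [|eassumption]); lia.
  - eapply Gup; [apply Gamma_g0|]. apply der_logax; [auto | exact I | apply L1].
  - intros H. apply Gamma_not_d0. eapply Gup; [exact H|].
    apply der_logax; [exact I | auto | apply L2].
  - intros a b H. pose proof (Gsig _ H) as [Ha Hb].
    destruct (Gamma_or_Delta a Ha) as [|[m Hm]]; auto.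
    destruct (Gamma_or_Delta b Hb) as [|[n Hn]]; auto.
    exfalso. apply (Gamma_Delta_disjoint _ H). exists (max m n).
    apply der_orE; (eapply der_trans; [eassumption|apply pair_at_mono]); lia.
  - intros psi H. destruct (Henum (fex psi)) as [n En].
    destruct (extend_decides (pair_at n) _ (pair_at_consistent n) (Gsig _ H))
      as [[_ H2]|[H2 _]].
    + destruct (H2 psi eq_refl) as [c Hc]. exists c, (S n). simpl. rewrite En. auto.
    + exfalso. apply (Gamma_Delta_disjoint _ H). exists (S n). simpl. rewrite En. auto.
  - intros s psi Hs HG. destruct (Henum (fall s psi)) as [n En].
    destruct (extend_decides (pair_at n) _ (pair_at_consistent n) Hs) as [[H2 _]|[_ H2]].
    + exfalso. apply HG. exists (S n). simpl. rewrite En. auto.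
    + destruct (H2 s psi eq_refl) as [c [Hc1 Hc2]]. exists c. split.
      * exists (S n). simpl. rewrite En. auto.
      * intros HG'. apply (Gamma_Delta_disjoint _ HG'). exists (S n). simpl. rewrite En. auto.
Qed.

End Construction.

(** * Semantics of substitution *)

Section Semantics.
Context {V : vocab} (M : structure V).
Implicit Types (rho be : nat -> dom M) (phi : formula V).

Definition env_insert (k : nat) (d : dom M) be : nat -> dom M :=
  fun n => if n <? k then be n else if n =? k then d else be (pred n).

Lemma env_insert0 d be n : env_insert 0 d be n = scons d be n.
Proof. unfold env_insert. destruct n; simpl; auto. Qed.

Lemma env_insert_S k d e be n :
  env_insert (S k) d (scons e be) n = scons e (env_insert k d be) n.
Proof.
  unfold env_insert. destruct n; simpl; auto. nat_cases; simpl; auto; try lia.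
  destruct n; simpl; [lia|]. reflexivity.
Qed.

Lemma teval_ext rho (t : term V) : forall be be', (forall n, be n = be' n) ->
  teval M rho be t = teval M rho be' t.
Proof.
  induction t using term_ind_list; intros be be' E; simpl; auto.
  f_equal. apply map_ext_Forall. eapply Forall_impl; [|exact H]. intros a Ha; auto.
Qed.

Lemma sat_ext rho phi : forall be be', (forall n, be n = be' n) ->
  (sat M rho be phi <-> sat M rho be' phi).
Proof.
  induction phi; intros be be' E; simpl.
  - erewrite map_ext; [reflexivity|]. intros; apply teval_ext; auto.
  - tauto.
  - tauto.
  - rewrite (IHphi1 be be'), (IHphi2 be be'); auto. tauto.
  - rewrite (IHphi1 be be'), (IHphi2 be be'); auto. tauto.
  - rewrite (teval_ext _ t be be' E). split; intros H d Hd; specialize (H d Hd);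
      (eapply IHphi; [|exact H]); intros [|n]; simpl; auto.
  - split; intros [d H]; exists d; (eapply IHphi; [|exact H]); intros [|n]; simpl; auto.
Qed.

Lemma teval_tlift rho (u : term V) : forall k d be,
  teval M rho (env_insert k d be) (tlift k u) = teval M rho be u.
Proof.
  induction u using term_ind_list; intros k d be; simpl; auto.
  - unfold env_insert. cbn -[Nat.ltb Nat.eqb]; nat_cases; cbn -[Nat.ltb Nat.eqb];
      nat_cases; auto; try lia.
  - f_equal. rewrite map_map. apply map_ext_Forall. eapply Forall_impl; [|exact H]. auto.
Qed.

Lemma teval_tlift0 rho (u : term V) d be :
  teval M rho (scons d be) (tlift 0 u) = teval M rho be u.
Proof.
  rewrite <- (teval_tlift rho u 0 d be). apply teval_ext. intros; symmetry; apply env_insert0.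
Qed.

Lemma teval_tinst rho (t : term V) : forall k u be,
  teval M rho be (tinst k u t) = teval M rho (env_insert k (teval M rho be u) be) t.
Proof.
  induction t using term_ind_list; intros k u be; simpl; auto.
  - unfold env_insert. nat_cases; simpl; auto.
  - f_equal. rewrite map_map. apply map_ext_Forall. eapply Forall_impl; [|exact H]. auto.
Qed.

Lemma sat_finst rho phi : forall k u be,
  sat M rho be (finst k u phi) <-> sat M rho (env_insert k (teval M rho be u) be) phi.
Proof.
  induction phi; intros k u be; simpl.
  - rewrite map_map. erewrite map_ext; [reflexivity|]. intros; apply teval_tinst.
  - tauto.
  - tauto.
  - rewrite IHphi1, IHphi2. tauto.
  - rewrite IHphi1, IHphi2. tauto.
  - rewrite teval_tinst. split; intros H d Hd; specialize (H d Hd).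
    + rewrite IHphi, teval_tlift0 in H. eapply sat_ext; [|exact H].
      intros; symmetry; apply env_insert_S.
    + rewrite IHphi, teval_tlift0. eapply sat_ext; [|exact H].
      intros; apply env_insert_S.
  - split; intros [d H]; exists d.
    + rewrite IHphi, teval_tlift0 in H. eapply sat_ext; [|exact H].
      intros; symmetry; apply env_insert_S.
    + rewrite IHphi, teval_tlift0. eapply sat_ext; [|exact H].
      intros; apply env_insert_S.
Qed.

Lemma sat_open rho phi u be :
  sat M rho be (open phi u) <-> sat M rho (scons (teval M rho be u) be) phi.
Proof. unfold open. rewrite sat_finst. apply sat_ext. intros; apply env_insert0. Qed.

Lemma teval_tpsubst rho rho' (t : term V) : forall sg be,
  (forall v, teval M rho be (sg v) = rho' v) ->
  teval M rho be (tpsubst sg t) = teval M rho' be t.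
Proof.
  induction t using term_ind_list; intros sg be E; simpl; auto.
  f_equal. rewrite map_map. apply map_ext_Forall. eapply Forall_impl; [|exact H]. auto.
Qed.

(* [sg] must evaluate to [rho'] under every bound environment, as it is pushed under binders. *)
Lemma sat_fpsubst rho rho' phi : forall sg be,
  (forall be v, teval M rho be (sg v) = rho' v) ->
  (sat M rho be (fpsubst sg phi) <-> sat M rho' be phi).
Proof.
  assert (Hup : forall (sg : nat -> term V) be v,
    teval M rho be (tlift 0 (sg v)) = teval M rho (fun n => be (S n)) (sg v)).
  { intros sg be v. rewrite <- (teval_tlift0 rho (sg v) (be 0)).
    apply teval_ext. intros [|n]; reflexivity. }
  induction phi; intros sg be E; simpl.
  - rewrite map_map. erewrite map_ext; [reflexivity|]. intros; apply teval_tpsubst; auto.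
  - tauto.
  - tauto.
  - rewrite IHphi1, IHphi2; auto. tauto.
  - rewrite IHphi1, IHphi2; auto. tauto.
  - rewrite (teval_tpsubst rho rho'); auto. split; intros H d Hd; specialize (H d Hd);
      (rewrite IHphi in *; [exact H|]); intros; rewrite Hup; auto.
  - split; intros [d H]; exists d; (rewrite IHphi in *; [exact H|]); intros; rewrite Hup; auto.
Qed.

End Semantics.

(** * The term model *)

Section HenkinTheory.
Context {V : vocab} (T : cond V -> Prop) (G : formula V -> Prop) (HG : henkin_theory T G).

Lemma ht_logax a b : G a -> sigma_formula b -> logax a b -> G b.
Proof.
  intros Ha Hb H. eapply ht_der; eauto. apply der_logax; auto. eapply ht_sigma; eauto.
Qed.

Lemma ht_and_iff a b : sigma_formula (fand a b) -> (G (fand a b) <-> G a /\ G b).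
Proof.
  intros [Ha Hb]. split.
  - intros H. split; (eapply (ht_der _ _ HG); [exact H |]); [apply der_andE1|apply der_andE2]; auto.
  - intros [A B]. apply (ht_and _ _ HG); auto.
Qed.

Lemma ht_or_iff a b : sigma_formula (f_or a b) -> (G (f_or a b) <-> G a \/ G b).
Proof.
  intros [Ha Hb]. split.
  - apply (ht_or _ _ HG).
  - intros [A|B]; (eapply (ht_der _ _ HG); [eassumption |]); [apply der_orI1|apply der_orI2]; auto.
Qed.

End HenkinTheory.

Section TermModel.
Context {V : vocab} (T : cond V -> Prop)
  (HaEq : par V (sEq V) = 2) (HaNeq : par V (sNeq V) = 2)
  (HaIn : par V (sIn V) = 2) (HaNin : par V (sNin V) = 2)
  (G : formula V -> Prop) (HG : henkin_theory T G).
Implicit Types (t u : term V) (ts us : list (term V)).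

Definition closed t := wf_term 0 t.
Definition geq t u := G (eqf t u).

Lemma sigma_atom2 p t u : par V p = 2 -> closed t -> closed u -> sigma_formula (fatom p [t; u]).
Proof. intros. split; [simpl; auto | repeat constructor; auto]. Qed.

Lemma geq_closed t u : geq t u -> closed t /\ closed u.
Proof.
  intros H. apply (ht_sigma _ _ HG) in H. destruct H as [_ H].
  inversion H; subst. inversion H3; subst. auto.
Qed.

Lemma geq_refl t : closed t -> geq t t.
Proof. intros. eapply (ht_logax _ _ HG); [apply (ht_top _ _ HG) | | apply L20]. apply sigma_atom2; auto. Qed.

Lemma geq_sym t u : geq t u -> geq u t.
Proof.
  intros H. destruct (geq_closed _ _ H).
  eapply (ht_logax _ _ HG); [exact H | | apply L21]. apply sigma_atom2; auto.
Qed.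

Lemma geq_trans t u w : geq t u -> geq u w -> geq t w.
Proof.
  intros H1 H2. destruct (geq_closed _ _ H1), (geq_closed _ _ H2).
  eapply (ht_logax _ _ HG); [apply (ht_and _ _ HG); [exact H1|exact H2] | | apply L22].
  apply sigma_atom2; auto.
Qed.

Lemma Forall2_geq_closed ts us : Forall2 geq ts us -> Forall closed ts.
Proof. induction 1; constructor; auto. apply (geq_closed _ _ H). Qed.

(* [H] must commute with substitutions fixing the free variables below [K], so
   that a variable beyond [K] and all the arguments can serve as the variable [a]
   of (L23). *)
Section Replacement.
Variable H : list (term V) -> formula V.
Variable K N : nat.
Hypothesis H_psubst : forall sg l, (forall v, v < K -> sg v = fvar v) ->
  fpsubst sg (H l) = H (map (tpsubst sg) l).
Hypothesis H_sigma : forall l, Forall closed l -> length l = N -> sigma_formula (H l).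

Lemma G_replace_arg pre post t u : Forall closed pre -> Forall closed post ->
  length (pre ++ t :: post) = N ->
  geq t u -> G (H (pre ++ t :: post)) -> G (H (pre ++ u :: post)).
Proof.
  intros Hpre Hpost Hl Htu HGt. destruct (geq_closed _ _ Htu) as [Ht Hu].
  set (a := max K (max (list_max (map tfv_bound pre)) (list_max (map tfv_bound post)))).
  set (phi := H (pre ++ fvar a :: post)).
  assert (Hs : forall w, fsubst1 a w phi = H (pre ++ w :: post)).
  { intros w. unfold fsubst1, phi. rewrite H_psubst.
    - rewrite map_app. simpl. rewrite Nat.eqb_refl. f_equal. f_equal.
      + apply map_id_Forall. rewrite Forall_forall. intros x Hx. apply tpsubst_fresh.
        intros v Hv. pose proof (tfv_bound_In x pre Hx).
        destruct (Nat.eqb_spec v a); auto; lia.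
      + f_equal. apply map_id_Forall. rewrite Forall_forall. intros x Hx. apply tpsubst_fresh.
        intros v Hv. pose proof (tfv_bound_In x post Hx).
        destruct (Nat.eqb_spec v a); auto; lia.
    - intros v Hv. destruct (Nat.eqb_spec v a); auto; lia. }
  assert (Hwu : sigma_formula (H (pre ++ u :: post))).
  { apply H_sigma. apply Forall_app; split; auto. rewrite length_app in *; simpl in *; lia. }
  rewrite <- Hs in HGt, Hwu |- *.
  eapply (ht_logax _ _ HG); [apply (ht_and _ _ HG); [exact Htu|exact HGt] | exact Hwu | apply L23].
Qed.

Lemma G_replace_args_app ts us : Forall2 geq ts us ->
  forall pre, Forall closed pre -> length (pre ++ ts) = N ->
  G (H (pre ++ ts)) -> G (H (pre ++ us)).
Proof.
  induction 1 as [|t y ts l' Hty HF IH]; intros pre Hpre Hl HGt; auto.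
  assert (Hts : Forall closed ts) by (apply (Forall2_geq_closed _ _ HF)).
  apply G_replace_arg with (u := y) in HGt; auto.
  replace (pre ++ y :: l') with ((pre ++ [y]) ++ l') by (rewrite <- app_assoc; auto).
  apply IH; auto.
  - apply Forall_app; split; auto. constructor; auto. apply (geq_closed _ _ Hty).
  - rewrite !length_app in *; simpl in *; lia.
  - rewrite <- app_assoc. exact HGt.
Qed.

Lemma G_replace_args ts us : length ts = N -> Forall2 geq ts us -> G (H ts) -> G (H us).
Proof. intros. apply (G_replace_args_app ts us H1 []); auto. Qed.

End Replacement.

Definition rep t : term V := epsilon (inhabits (fvar 0)) (fun u => closed u /\ geq t u).

Lemma rep_spec t : closed t -> closed (rep t) /\ geq t (rep t).
Proof. intros Ht. unfold rep. apply epsilon_spec. exists t. split; auto. apply geq_refl; auto. Qed.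

Lemma rep_eq t u : geq t u -> rep t = rep u.
Proof.
  intros Htu. unfold rep. f_equal. apply functional_extensionality. intros w.
  apply propositional_extensionality. split; intros [Hw H]; split; auto.
  - eapply geq_trans; [apply geq_sym|]; eauto.
  - eapply geq_trans; eauto.
Qed.

Lemma rep_idem t : closed t -> rep (rep t) = rep t.
Proof. intros Ht. symmetry. apply rep_eq. apply rep_spec; auto. Qed.

Lemma rep_geq t u : closed t -> closed u -> rep t = rep u -> geq t u.
Proof.
  intros Ht Hu Heq. eapply geq_trans; [apply (rep_spec t Ht)|]. rewrite Heq.
  apply geq_sym. apply rep_spec; auto.
Qed.

Lemma Forall2_geq_rep ts : Forall closed ts -> Forall2 geq ts (map rep ts).
Proof. induction 1; simpl; constructor; auto. apply (proj2 (rep_spec x H)). Qed.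

Lemma Forall_closed_rep ts : Forall closed ts -> Forall closed (map rep ts).
Proof. induction 1; simpl; constructor; auto. apply (proj1 (rep_spec x H)). Qed.

Lemma G_atom_rep p ts : length ts = par V p -> Forall closed ts ->
  (G (fatom p (map rep ts)) <-> G (fatom p ts)).
Proof.
  intros Hl Hw.
  assert (Hsig : forall l, Forall closed l -> length l = length ts -> sigma_formula (fatom p l))
    by (intros l Hl' Hlen; split; auto; lia).
  split; apply (G_replace_args (fatom p) 0 (length ts)); auto; rewrite ?length_map; auto.
  - apply Forall2_flip. eapply Forall2_impl; [|apply Forall2_geq_rep; auto]. apply geq_sym.
  - apply Forall2_geq_rep; auto.
Qed.

Definition carrier := {t : term V | closed t /\ rep t = t}.

Lemma carrier_eq (a b : carrier) : proj1_sig a = proj1_sig b -> a = b.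
Proof.
  destruct a as [x Hx], b as [y Hy]; simpl. intros ->. f_equal. apply proof_irrelevance.
Qed.

Lemma carrier_closed (d : carrier) : closed (proj1_sig d).
Proof. destruct d as [x [Hx Hr]]; auto. Qed.

Definition class_of_closed t (Ht : closed t) : carrier :=
  exist _ (rep t) (conj (proj1 (rep_spec t Ht)) (rep_idem t Ht)).

(* [class t] is the class of [t] for closed [t], and junk otherwise. *)
Definition class t : carrier :=
  match excluded_middle_informative (closed t) with
  | left Ht => class_of_closed t Ht
  | right _ => class_of_closed (fvar 0) I
  end.

Lemma class_val t : closed t -> proj1_sig (class t) = rep t.
Proof.
  intros Ht. unfold class.
  destruct (excluded_middle_informative (closed t)); [reflexivity|contradiction].
Qed.

Lemma class_of_val (d : carrier) : class (proj1_sig d) = d.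
Proof. apply carrier_eq. destruct d as [x [Hx Hr]]. simpl. rewrite class_val; auto. Qed.

Lemma class_eq t u : closed t -> closed u -> (class t = class u <-> geq t u).
Proof.
  intros Ht Hu. split.
  - intros H. apply rep_geq; auto. rewrite <- !class_val by auto. rewrite H. auto.
  - intros H. apply carrier_eq. rewrite !class_val by auto. apply rep_eq; auto.
Qed.

Definition term_model : structure V :=
  Structure V carrier (fun f ds => class (tapp f (map (@proj1_sig _ _) ds)))
    (fun p ds => G (fatom p (map (@proj1_sig _ _) ds))).

Definition canonical_env : nat -> dom term_model := fun v => class (fvar v).

Lemma map_val_class ts : Forall closed ts -> map (@proj1_sig _ _) (map class ts) = map rep ts.
Proof.
  intros Hw. rewrite map_map. apply map_ext_in. intros x Hx.
  rewrite Forall_forall in Hw. apply class_val; auto.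
Qed.

Lemma teval_term_model t : closed t -> forall be, teval term_model canonical_env be t = class t.
Proof.
  induction t using term_ind_list; intros Ht be.
  - reflexivity.
  - unfold closed in Ht; simpl in Ht; lia.
  - apply wf_term_app in Ht. destruct Ht as [Hl Hw].
    assert (Eval : map (teval term_model canonical_env be) ts = map class ts).
    { apply map_ext_in. intros x Hx. rewrite Forall_forall in H, Hw. apply H; auto. exact (Hw x Hx). }
    change (class (tapp f (map (@proj1_sig _ _) (map (teval term_model canonical_env be) ts)))
            = class (tapp f ts)).
    rewrite Eval, map_val_class by auto.
    apply class_eq; [apply wf_term_app; rewrite length_map; auto using Forall_closed_rep
                    | apply wf_term_app; auto |].
    apply geq_sym.
    apply (G_replace_args (fun l => eqf (tapp f ts) (tapp f l)) (tfv_bound (tapp f ts))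
                          (length ts)) with (ts := ts).
    + intros sg l Hsg. pose proof (tpsubst_fresh (tapp f ts) sg Hsg) as Ef.
      simpl in Ef |- *. rewrite Ef. reflexivity.
    + intros l Hl' Hlen. apply sigma_atom2; auto; apply wf_term_app; split; auto; lia.
    + reflexivity.
    + apply Forall2_geq_rep; auto.
    + apply geq_refl. apply wf_term_app; auto.
Qed.

Lemma predI_term_model p ts : length ts = par V p -> Forall closed ts ->
  (predI term_model p (map class ts) <-> G (fatom p ts)).
Proof. intros Hl Hw. simpl. rewrite map_val_class by auto. apply G_atom_rep; auto. Qed.

Lemma sat_term_model_open be psi t : closed t ->
  (sat term_model canonical_env be (open psi t) <->
   sat term_model canonical_env (scons (class t) be) psi).
Proof. intros Ht. rewrite sat_open, teval_term_model; auto. reflexivity. Qed.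

Notation sat_tm := (sat term_model canonical_env).

Lemma truth_atom p ts be : sigma_formula (fatom p ts) -> (sat_tm be (fatom p ts) <-> G (fatom p ts)).
Proof.
  intros [Hl Hw]. simpl.
  rewrite (map_ext_in _ class) by (intros x Hx; rewrite Forall_forall in Hw;
                                   apply teval_term_model; apply Hw; auto).
  apply predI_term_model; auto.
Qed.

Lemma truth_all s psi be : sigma_formula (fall s psi) ->
  (forall t be, closed t -> (sat_tm be (open psi t) <-> G (open psi t))) ->
  (sat_tm be (fall s psi) <-> G (fall s psi)).
Proof.
  intros Hs IH. pose proof Hs as [Hts Hps]. simpl. rewrite (teval_term_model s Hts). split.
  - intros Hsat. apply NNPP. intros HGs.
    destruct (ht_all _ _ HG s psi Hs HGs) as [c [Hc1 Hc2]]. apply Hc2.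
    apply (IH (fvar c) be I), (sat_term_model_open _ _ (fvar c) I), Hsat.
    apply (predI_term_model (sIn V) [fvar c; s]); auto. repeat constructor; auto.
  - intros HGs d Hd. rewrite <- (class_of_val d), <- sat_term_model_open, IH
      by apply carrier_closed.
    assert (Hin : G (inf (proj1_sig d) s)).
    { apply (predI_term_model (sIn V) [proj1_sig d; s]); auto.
      - repeat constructor; auto. apply carrier_closed.
      - simpl. rewrite class_of_val. exact Hd. }
    eapply (ht_logax _ _ HG); [apply (ht_and _ _ HG); [exact Hin | exact HGs] | | apply L13].
    apply sigma_open; auto. apply carrier_closed.
Qed.

Lemma truth_ex psi be : sigma_formula (fex psi) ->
  (forall t be, closed t -> (sat_tm be (open psi t) <-> G (open psi t))) ->
  (sat_tm be (fex psi) <-> G (fex psi)).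
Proof.
  intros Hs IH. simpl. split.
  - intros [d Hd]. rewrite <- (class_of_val d), <- sat_term_model_open, IH in Hd
      by apply carrier_closed.
    eapply (ht_logax _ _ HG); [exact Hd | exact Hs | apply L10].
  - intros HGs. destruct (ht_ex _ _ HG psi HGs) as [c Hc]. exists (class (fvar c)).
    rewrite <- sat_term_model_open, IH; auto; exact I.
Qed.

Fixpoint fsize (phi : formula V) : nat :=
  match phi with
  | fatom _ _ | ftop | fbot => 1
  | fand a b | f_or a b => S (fsize a + fsize b)
  | fall _ a | fex a => S (fsize a)
  end.

Lemma fsize_finst phi : forall k u, fsize (finst k u phi) = fsize phi.
Proof. induction phi; intros; simpl; auto. Qed.

Lemma term_model_truth phi be : sigma_formula phi -> (sat_tm be phi <-> G phi).
Proof.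
  revert be. induction phi as [phi IH] using (induction_ltof1 _ fsize). unfold ltof in IH.
  intros be Hs.
  assert (IHopen : forall psi, fsize psi < fsize phi -> wf_form 1 psi ->
            forall t be, closed t -> (sat_tm be (open psi t) <-> G (open psi t))).
  { intros psi Hsz Hw t be' Ht. apply IH; [unfold open; rewrite fsize_finst; auto|].
    apply sigma_open; auto. }
  destruct phi; simpl in IH, IHopen.
  - apply truth_atom; auto.
  - split; auto. intros _. apply (ht_top _ _ HG).
  - split; [contradiction | apply (ht_bot _ _ HG)].
  - rewrite (ht_and_iff _ _ HG); auto. destruct Hs.
    simpl. rewrite !IH by (auto; lia). reflexivity.
  - rewrite (ht_or_iff _ _ HG); auto. destruct Hs.
    simpl. rewrite !IH by (auto; lia). reflexivity.
  - apply truth_all; auto. apply IHopen; [lia | apply Hs].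
  - apply truth_ex, IHopen; auto.
Qed.

Lemma term_model_admissible : admissible term_model.
Proof.
  assert (Hsig : forall p (a b : carrier), par V p = 2 ->
    sigma_formula (fatom p [proj1_sig a; proj1_sig b]))
    by (intros; apply sigma_atom2; auto; apply carrier_closed).
  assert (Heq : forall a b : carrier, geq (proj1_sig a) (proj1_sig b) <-> a = b).
  { intros a b. rewrite <- (class_eq _ _ (carrier_closed a) (carrier_closed b)),
      !class_of_val. reflexivity. }
  split; [|split]; intros a b; simpl; [apply Heq | |].
  - split.
    + intros H ->. apply (ht_bot _ _ HG). eapply (ht_logax _ _ HG);
        [apply (ht_and _ _ HG); [apply (geq_refl _ (carrier_closed b)) | exact H] | exact I
        | apply L19].
    + intros Hab. destruct (ht_or _ _ HG (eqf (proj1_sig a) (proj1_sig b))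
                                        (neqf (proj1_sig a) (proj1_sig b))) as [He|Hn]; auto.
      * eapply (ht_logax _ _ HG); [apply (ht_top _ _ HG) | split; apply Hsig; auto | apply L18].
      * exfalso. apply Hab, Heq, He.
  - split.
    + intros H Hi. apply (ht_bot _ _ HG). eapply (ht_logax _ _ HG);
        [apply (ht_and _ _ HG); [exact Hi | exact H] | exact I | apply L17].
    + intros Hab. destruct (ht_or _ _ HG (inf (proj1_sig a) (proj1_sig b))
                                        (ninf (proj1_sig a) (proj1_sig b))) as [Hi|Hn]; auto.
      * eapply (ht_logax _ _ HG); [apply (ht_top _ _ HG) | split; apply Hsig; auto | apply L16].
      * contradiction.
Qed.

(* Every assignment is named by closed terms, and [G] is closed under the
   corresponding substitution instances of [T]. *)
Lemma term_model_models (HT : forall c, T c -> sigma_formula (fst c) /\ sigma_formula (snd c)) :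
  forall c, T c -> models term_model c.
Proof.
  intros c Hc rho be Hs. destruct (HT c Hc) as [H1 H2].
  set (sg := fun v => proj1_sig (rho v)).
  assert (Hsg : forall be v, teval term_model canonical_env be (sg v) = rho v).
  { intros be' v. unfold sg. rewrite teval_term_model by apply carrier_closed.
    apply class_of_val. }
  assert (Hw : forall v, wf_term 0 (sg v)) by (intros; apply carrier_closed).
  rewrite <- (sat_fpsubst term_model canonical_env rho _ sg be Hsg) in Hs.
  rewrite <- (sat_fpsubst term_model canonical_env rho _ sg be Hsg).
  rewrite term_model_truth in Hs |- * by (apply wf_fpsubst; auto).
  eapply (ht_der _ _ HG); [exact Hs|]. apply chain_step; try (apply wf_fpsubst; auto).
  exists hole, (fpsubst sg (fst c)), (fpsubst sg (snd c)). split; auto.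
  right. exists c, sg. auto.
Qed.

End TermModel.

(** * Enumeration of formulas *)

Definition code2 (a b : nat) : nat := Cantor.to_nat (a, b).

Lemma code2_inj a b c d : code2 a b = code2 c d -> a = c /\ b = d.
Proof.
  intros H. assert (E : Cantor.of_nat (code2 a b) = Cantor.of_nat (code2 c d)) by (rewrite H; auto).
  unfold code2 in E. rewrite !Cantor.cancel_of_to in E. inversion E; auto.
Qed.

Section Enumeration.
Context {V : vocab} (eF : fsym V -> nat) (eP : psym V -> nat)
  (HF : forall f g, eF f = eF g -> f = g) (HP : forall p q, eP p = eP q -> p = q).

Fixpoint code_list {A} (c : A -> nat) (l : list A) : nat :=
  match l with [] => 0 | x :: l' => S (code2 (c x) (code_list c l')) end.

Fixpoint code_term (t : term V) : nat :=
  match t with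
  | fvar v => code2 0 v
  | bvar n => code2 1 n
  | tapp f ts => code2 2 (code2 (eF f) ((fix cl (l : list (term V)) : nat :=
       match l with [] => 0 | x :: l' => S (code2 (code_term x) (cl l')) end) ts))
  end.

Lemma code_term_app f ts : code_term (tapp f ts) = code2 2 (code2 (eF f) (code_list code_term ts)).
Proof. simpl. do 2 f_equal. induction ts; simpl; auto. Qed.

Lemma code_list_inj {A} (c : A -> nat) l : Forall (fun x => forall y, c x = c y -> x = y) l ->
  forall l', code_list c l = code_list c l' -> l = l'.
Proof.
  induction 1; intros [|y l'] E; simpl in E; try discriminate; auto.
  injection E; intros E'. apply code2_inj in E'. destruct E'. f_equal; auto.
Qed.

Lemma code_term_inj t : forall u, code_term t = code_term u -> t = u.
Proof.
  induction t using term_ind_list; intros [w|m|g us] E;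
    rewrite ?code_term_app in E; simpl in E;
    apply code2_inj in E; destruct E as [E1 E2]; try discriminate; subst; auto.
  apply code2_inj in E2. destruct E2 as [E3 E4]. apply HF in E3. subst. f_equal.
  eapply code_list_inj; eauto.
Qed.

Fixpoint code_formula (phi : formula V) : nat :=
  match phi with
  | fatom p ts => code2 0 (code2 (eP p) (code_list code_term ts))
  | ftop => code2 1 0
  | fbot => code2 1 1
  | fand a b => code2 2 (code2 (code_formula a) (code_formula b))
  | f_or a b => code2 3 (code2 (code_formula a) (code_formula b))
  | fall t a => code2 4 (code2 (code_term t) (code_formula a))
  | fex a => code2 5 (code_formula a)
  end.

Lemma code_formula_inj phi : forall psi, code_formula phi = code_formula psi -> phi = psi.
Proof.
  induction phi; intros [q us| | |a b|a b|u a|a] E; simpl in E;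
    apply code2_inj in E; destruct E as [E1 E2]; try discriminate; auto;
    try (apply code2_inj in E2; destruct E2 as [E3 E4]); try discriminate.
  - apply HP in E3. subst. f_equal. eapply code_list_inj; eauto.
    rewrite Forall_forall. intros; apply code_term_inj; auto.
  - f_equal; auto.
  - f_equal; auto.
  - f_equal; auto. apply code_term_inj; auto.
  - f_equal; auto.
Qed.

End Enumeration.

Lemma formula_enumeration V (HcF : exists e : fsym V -> nat, forall f g, e f = e g -> f = g)
  (HcP : exists e : psym V -> nat, forall p q, e p = e q -> p = q) :
  exists enum : nat -> option (formula V), forall phi, exists n, enum n = Some phi.
Proof.
  destruct HcF as [eF HF], HcP as [eP HP].
  exists (fun n => match excluded_middle_informative (exists phi, code_formula eF eP phi = n) with
            | left H => Some (proj1_sig (constructive_indefinite_description _ H))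
            | right _ => None
            end).
  intros phi. exists (code_formula eF eP phi).
  destruct (excluded_middle_informative _) as [H|H]; [|exfalso; eauto].
  f_equal. destruct (constructive_indefinite_description _ H) as [psi Hp]. simpl.
  apply (code_formula_inj eF eP HF HP); auto.
Qed.

Arguments sigma_formula : clear implicits.
Arguments proves : clear implicits.
Arguments admissible : clear implicits.
Arguments models : clear implicits.
Arguments sat : clear implicits.
Arguments dom : clear implicits.

Theorem mainTheorem1 (Sv : vocab)
  (HcF : exists e : fsym Sv -> nat, forall f g, e f = e g -> f = g)
  (HcP : exists e : psym Sv -> nat, forall p q, e p = e q -> p = q)
  (HaEq : par Sv (sEq Sv) = 2) (HaNeq : par Sv (sNeq Sv) = 2)
  (HaIn : par Sv (sIn Sv) = 2) (HaNin : par Sv (sNin Sv) = 2)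
  (Hd1 : sEq Sv <> sNeq Sv) (Hd2 : sEq Sv <> sIn Sv) (Hd3 : sEq Sv <> sNin Sv)
  (Hd4 : sNeq Sv <> sIn Sv) (Hd5 : sNeq Sv <> sNin Sv) (Hd6 : sIn Sv <> sNin Sv)
  (T : cond Sv -> Prop)
  (HT : forall c, T c -> sigma_formula Sv (fst c) /\ sigma_formula Sv (snd c))
  (chi chi' : formula Sv)
  (Hchi : sigma_formula Sv chi) (Hchi' : sigma_formula Sv chi') :
  proves Sv T chi chi' \/
  exists M : structure Sv, admissible Sv M /\
    (forall c, T c -> models Sv M c) /\
    exists rho be : nat -> dom Sv M, sat Sv M rho be chi /\ ~ sat Sv M rho be chi'.
Proof.
  destruct (classic (proves Sv T chi chi')) as [Hpr|Hnpr]; [left; exact Hpr | right].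
  destruct (formula_enumeration Sv HcF HcP) as [enum Henum].
  assert (Hnd : ~ der T chi chi') by (rewrite <- proves_der; exact Hnpr).
  pose proof (Gamma_henkin T HaIn enum Henum chi chi' Hchi Hchi' Hnd) as HG.
  exists (term_model T HaEq _ HG). split; [|split].
  - apply term_model_admissible; auto.
  - apply term_model_models; auto.
  - exists (canonical_env T HaEq _ HG), (canonical_env T HaEq _ HG).
    rewrite !term_model_truth by auto. split.
    + apply Gamma_g0; auto.
    + apply Gamma_not_d0; auto.
Qed.
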